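(* Let $d\ge 1$ and let $D$ be a collection of at most $d$ simplices over $[n]$, each of dimension at most $d$. Then every $(d-1)$-cycle supported on $K(D)$ is a $(d-1)$-boundary of $K(D)$; that is, every such cycle $Z$ can be written as $Z=\sum_{\sigma\in D,\ \dim\sigma=d} c_\sigma\,\partial\sigma$ with $c_\sigma\in\mathbb F$. Equivalently, $\tilde H_{d-1}(K(D))=0$.
   Context: Fix a field $\mathbb F$ and an integer $n\ge 1$. A $d$-simplex is a subset $\sigma\subseteq[n]$ with $|\sigma|=d+1$, oriented by listing its elements in increasing order $s_1<\dots<s_{d+1}$; the empty set is the unique $(-1)$-simplex. A simplicial complex is a family of simplices closed under taking subsets (faces). For a set $S$ of simplices, $K(S)$ denotes the simplicial complex consisting of all subsets of members of $S$. A $d$-chain is a formal $\mathbb F$-linear combination of $d$-simplices; its support $\mathrm{Supp}$ is the set of simplices with nonzero coefficient, and it is supported on a complex $K$ if its support lies in $K$. The boundary operator is $\partial\sigma=\sum_{i=1}^{d+1}(-1)^{i-1}(\sigma\setminus\{s_i\})$, extended linearly (so the boundary of a vertex is the empty simplex; reduced homology convention). A $d$-cycle is a $d$-chain $Z$ with $\partial Z=0$; it is a $d$-boundary of $K$ if $Z=\partial B$ for some $(d+1)$-chain $B$ supported on $K$. $\tilde H_d(K)$ is the quotient of the space of $d$-cycles supported on $K$ by the space of $d$-boundaries of $K$. *)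

From HB Require Import structures.
From mathcomp Require Import all_boot all_order all_algebra.
Set Implicit Arguments. Unset Strict Implicit. Unset Printing Implicit Defensive.
Import Order.TTheory GRing.Theory Num.Theory.
Local Open Scope ring_scope.

(* A simplex over [n] is a finite set of vertices; a k-simplex has k+1 elements;
   set0 is the unique (-1)-simplex. *)
Definition simplex (n : nat) := {set 'I_n}.

(* Chains: formal F-linear combinations of simplices (finite, so all functions). *)
Notation chain F n := {ffun {set 'I_n} -> F%type} (only parsing).

Definition Supp (F : fieldType) (n : nat) (c : chain F n) : {set {set 'I_n}} :=
  [set s | c s != 0].

Definition is_chain_of_size (F : fieldType) (n : nat) (m : nat) (c : chain F n) :=
  forall s, s \in Supp c -> #|s| = m.

Definition Kcx (n : nat) (S : {set {set 'I_n}}) : {set {set 'I_n}} :=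
  [set t : {set 'I_n} | [exists s in S, t \subset s]].

Definition supported_on (F : fieldType) (n : nat) (c : chain F n) (K : {set {set 'I_n}}) :=
  Supp c \subset K.

(* Boundary of a single simplex s = {s_1 < ... < s_(k+1)}:
   sum_i (-1)^(i-1) (s \ {s_i}); the index of vertex v in s (0-based) is
   #|{ j in s | j < v }|. *)
Definition bd_simplex (F : fieldType) (n : nat) (s : {set 'I_n}) : chain F n :=
  [ffun t => \sum_(v in s)
      (if s :\ v == t then (-1) ^+ #|[set j in s | (nat_of_ord j < nat_of_ord v)%N]| else 0)].

Definition bd (F : fieldType) (n : nat) (c : chain F n) : chain F n :=
  [ffun t => \sum_(s : {set 'I_n}) c s * bd_simplex F s t].

From HB Require Import structures.
From mathcomp Require Import all_boot all_order all_algebra.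
Set Implicit Arguments. Unset Strict Implicit. Unset Printing Implicit Defensive.
Import GRing.Theory.
Local Open Scope ring_scope.

(* Induction on the number of generators.  Pick S in D and put D' = D \ {S}.
   A cycle Z on K(D) splits as Z1 + Z2, with Z2 the part on the full simplex
   2^S and Z1 on K(D').  The common boundary dZ1 = - dZ2 lies on
   K(D') /\ 2^S = K({S /\ t | t in D'}), which has fewer generators, so it
   bounds a chain W there, one dimension lower.  Then Z1 - W is a cycle on K(D'),
   which bounds by induction, and Z2 + W a cycle on 2^S, which bounds because the
   full simplex is a cone over its least vertex.  Since both the number of
   generators and the dimension drop by one when passing to the intersection
   complex, the hypothesis |D| <= d is preserved. *)

Lemma sum_antisym (V : zmodType) m (G : 'I_m -> 'I_m -> V) :
  (forall u, G u u = 0) -> (forall u w : 'I_m, (u < w)%N -> G w u = - G u w) ->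
  \sum_u \sum_w G u w = 0.
Proof.
move=> G0 GN.
(* Pair the terms (u, w) and (w, u) explicitly: "S = - S" would not suffice in
   characteristic 2. *)
have splitG u w :
    G u w = (if (u < w)%N then G u w else 0) + (if (w < u)%N then G u w else 0).
  by case: ltngtP => [||/val_inj ->]; rewrite ?addr0 ?add0r ?G0.
under eq_bigr do rewrite (eq_bigr _ (fun w _ => splitG _ w)) big_split.
rewrite big_split /= [X in _ + X]exchange_big -big_split /=.
apply: big1 => u _; rewrite -big_split; apply: big1 => w _ /=.
by case: ifP => [uw|_]; rewrite ?(GN u w uw) ?addrN ?addr0.
Qed.

Section Chains.
Variables (F : fieldType) (n : nat).
Implicit Types (c Z : chain F n) (r s t S : {set 'I_n}) (u v w : 'I_n)
  (A K D : {set {set 'I_n}}).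

Definition incidence r u : F := (-1) ^+ #|[set j in r | (j < u)%N]|.

Lemma incidence_insert_lt r u w :
  u \notin r -> (u < w)%N -> incidence (u |: r) w = - incidence r w.
Proof.
move=> ur uw; rewrite /incidence.
have -> : [set j in u |: r | (j < w)%N] = u |: [set j in r | (j < w)%N].
  by apply/setP => j; rewrite !inE; case: (eqVneq j u) => //= ->; rewrite uw.
by rewrite cardsU1 inE (negbTE ur) exprS mulN1r.
Qed.

Lemma incidence_insert_ge r u w : (w <= u)%N -> incidence (u |: r) w = incidence r w.
Proof.
move=> wu; rewrite /incidence; congr (_ ^+ _); apply: eq_card => j.
by rewrite !inE; case: (eqVneq j u) => //= ->; rewrite ltnNge wu andbF.
Qed.

Lemma incidenceD1 r v : incidence (r :\ v) v = incidence r v.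
Proof.
rewrite /incidence; congr (_ ^+ _); apply: eq_card => j.
by rewrite !inE; case: (eqVneq j v) => //= ->; rewrite ltnn andbF.
Qed.

Lemma incidence_min r v : (forall j, j \in r -> (v <= j)%N) -> incidence r v = 1.
Proof.
move=> vr; rewrite /incidence (_ : [set _ in _ | _] = set0) ?cards0 //.
by apply/setP => j; rewrite !inE; apply/andP => -[/vr]; rewrite leqNgt => /negbTE ->.
Qed.

Lemma bd_simplexE s t : bd_simplex F s t = \sum_(v in s | s :\ v == t) incidence s v.
Proof. by rewrite ffunE big_mkcondr. Qed.

Lemma bd_coef c r : bd c r = \sum_(u | u \notin r) incidence r u * c (u |: r).
Proof.
rewrite ffunE; under eq_bigr do rewrite bd_simplexE big_distrr.
rewrite (exchange_big_dep predT) //= [RHS]big_mkcond; apply: eq_bigr => u _.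
case: (boolP (u \in r)) => ur /=.
  by apply: big_pred0 => s; apply/andP => -[us /eqP e]; move: ur; rewrite -e setD11.
rewrite (big_pred1 (u |: r)) => [|s]; first by rewrite mulrC incidence_insert_ge.
apply/andP/eqP => [[us /eqP <-] | ->]; first by rewrite setD1K.
by rewrite setU11 setU1K.
Qed.

Lemma bd0 : bd (0 : chain F n) = 0.
Proof. by apply/ffunP => t; rewrite !ffunE big1 // => s _; rewrite ffunE mul0r. Qed.

Lemma bdD c1 c2 : bd (c1 + c2) = bd c1 + bd c2.
Proof.
by apply/ffunP => t; rewrite !ffunE -big_split; apply: eq_bigr => s _; rewrite ffunE mulrDl.
Qed.

Lemma bdN c : bd (- c) = - bd c.
Proof.
by apply/ffunP => t; rewrite !ffunE -sumrN; apply: eq_bigr => s _; rewrite ffunE mulNr.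
Qed.

Lemma bdB c1 c2 : bd (c1 - c2) = bd c1 - bd c2.
Proof. by rewrite bdD bdN. Qed.

Lemma bd_bd c : bd (bd c) = 0.
Proof.
apply/ffunP => r; rewrite bd_coef [RHS]ffunE.
pose G u w := if (u \notin r) && (w \notin u |: r) then
  incidence r u * incidence (u |: r) w * c (w |: (u |: r)) else 0.
transitivity (\sum_u \sum_w G u w).
  rewrite big_mkcond; apply: eq_bigr => u _; rewrite /G.
  case: (u \notin r) => /=; last by rewrite big1.
  rewrite bd_coef big_distrr big_mkcond; apply: eq_bigr => w _.
  by case: (w \notin u |: r) => //=; rewrite mulrA.
apply: sum_antisym => [u | u w uw]; first by rewrite /G setU11 andbF.
have wu_neq : w != u by rewrite neq_ltn uw orbT.
rewrite /G !in_setU1 (negbTE wu_neq) eq_sym (negbTE wu_neq) /=.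
case: (boolP (u \in r)) => ur; first by rewrite andbF oppr0.
case: (boolP (w \in r)) => wr //=; first by rewrite oppr0.
rewrite (incidence_insert_lt ur uw) (incidence_insert_ge r (ltnW uw)) setUCA.
by rewrite mulrN mulNr opprK (mulrC (incidence r w)).
Qed.

Lemma Supp0 : Supp (0 : chain F n) = set0.
Proof. by apply/setP => t; rewrite !inE ffunE eqxx. Qed.

Lemma SuppD c1 c2 : Supp (c1 + c2) \subset Supp c1 :|: Supp c2.
Proof.
apply/subsetP => t; rewrite !inE ffunE; apply: contraR.
by rewrite negb_or !negbK => /andP [/eqP -> /eqP ->]; rewrite addr0.
Qed.

Lemma SuppN c : Supp (- c) = Supp c.
Proof. by apply/setP => t; rewrite !inE ffunE oppr_eq0. Qed.

Lemma Supp_bd c r : r \in Supp (bd c) -> exists2 u, u \notin r & u |: r \in Supp c.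
Proof.
rewrite inE bd_coef => nz; apply/exists_inP; apply: contraNT nz => /exists_inPn H.
by apply/eqP/big1 => u /H; rewrite inE negbK => /eqP ->; rewrite mulr0.
Qed.

Definition cone v c : chain F n :=
  [ffun t : {set 'I_n} => if v \in t then c (t :\ v) else 0].

Lemma cone0 v : cone v 0 = 0.
Proof. by apply/ffunP => t; rewrite !ffunE if_same. Qed.

Lemma Supp_cone v c t : (t \in Supp (cone v c)) = (v \in t) && (t :\ v \in Supp c).
Proof. by rewrite !inE ffunE; case: (v \in t); rewrite ?eqxx. Qed.

Lemma bd_cone v c : (forall t j, t \in Supp c -> j \in t -> (v <= j)%N) ->
  bd (cone v c) = c - cone v (bd c).
Proof.
move=> vmin; apply/ffunP => r; rewrite bd_coef.
have -> : (c - cone v (bd c)) r = c r - (if v \in r then bd c (r :\ v) else 0).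
  by rewrite !ffunE.
have apex (t : {set 'I_n}) : incidence t v * c t = c t.
  have [->|ct] := eqVneq (c t) 0; first by rewrite mulr0.
  by rewrite incidence_min ?mul1r // => j; apply: vmin; rewrite inE.
case: (boolP (v \in r)) => vr; last first.
  rewrite subr0 (bigD1 v) //= ffunE setU11 setU1K // apex big1 ?addr0 //.
  move=> u /andP [_ uv].
  by rewrite ffunE in_setU1 (negbTE vr) orbF eq_sym (negbTE uv) mulr0.
rewrite bd_coef [X in _ - X](bigD1 v) ?setD11 //= setD1K // incidenceD1 apex.
rewrite opprD addrA subrr add0r -sumrN.
rewrite [in RHS](eq_bigl (fun u => u \notin r)) => [|u]; last first.
  rewrite in_setD1 negb_and negbK andb_orl andbN /=.
  by case: eqP => [->|]; rewrite ?vr ?andbT.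
apply: eq_bigr => u ur; have uv : u != v by apply: contraNneq ur => ->.
rewrite ffunE setU1r //.
have -> : (u |: r) :\ v = u |: (r :\ v).
  by apply/setP => j; rewrite !inE; case: (eqVneq j v) => // ->; rewrite eq_sym (negbTE uv).
have [->|cu] := eqVneq (c (u |: (r :\ v))) 0.
  by rewrite !mulr0 oppr0.
have vu : (v < u)%N.
  by rewrite ltn_neqAle eq_sym uv (vmin (u |: (r :\ v)) u) ?setU11 ?inE.
by rewrite -{1}(setD1K vr) incidence_insert_lt ?setD11 // mulNr.
Qed.

Lemma is_chain_of_size_sub m c c' :
  Supp c' \subset Supp c -> is_chain_of_size m c -> is_chain_of_size m c'.
Proof. by move=> sub h t /(subsetP sub) /h. Qed.

Lemma is_chain_of_sizeD m c1 c2 :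
  is_chain_of_size m c1 -> is_chain_of_size m c2 -> is_chain_of_size m (c1 + c2).
Proof. by move=> h1 h2 t /(subsetP (SuppD c1 c2)); rewrite inE => /orP [/h1|/h2]. Qed.

Lemma is_chain_of_sizeB m c1 c2 :
  is_chain_of_size m c1 -> is_chain_of_size m c2 -> is_chain_of_size m (c1 - c2).
Proof. by move=> h1 h2; apply: is_chain_of_sizeD => // t; rewrite SuppN => /h2. Qed.

Lemma is_chain_of_size_bd m c : is_chain_of_size m.+1 c -> is_chain_of_size m (bd c).
Proof. by move=> h r /Supp_bd [u ur /h]; rewrite cardsU1 ur => -[]. Qed.

Lemma supported_onD K c1 c2 :
  supported_on c1 K -> supported_on c2 K -> supported_on (c1 + c2) K.
Proof.
by move=> h1 h2; apply: subset_trans (SuppD c1 c2) _; rewrite subUset; apply/andP.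
Qed.

Lemma supported_onB K c1 c2 :
  supported_on c1 K -> supported_on c2 K -> supported_on (c1 - c2) K.
Proof. by move=> h1 h2; apply: supported_onD; rewrite // /supported_on SuppN. Qed.

Definition simplicial_complex K := forall s t, s \in K -> t \subset s -> t \in K.

Lemma supported_on_bd K c :
  simplicial_complex K -> supported_on c K -> supported_on (bd c) K.
Proof.
move=> cxK cK; apply/subsetP => r /Supp_bd [u _ /(subsetP cK) uK].
exact: cxK uK (subsetUr _ _).
Qed.

Lemma simplicial_complex_powerset S : simplicial_complex (powerset S).
Proof. by move=> s t; rewrite !powersetE => sS ts; apply: subset_trans ts sS. Qed.

Definition cycles_bound K m := forall Z, is_chain_of_size m Z -> supported_on Z K ->
  bd Z = 0 -> exists B, [/\ is_chain_of_size m.+1 B, supported_on B K & Z = bd B].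

Lemma cycles_bound_void K m : (forall t, t \in K -> #|t| != m) -> cycles_bound K m.
Proof.
move=> noK Z Zsz ZK _; have -> : Z = 0.
  apply/ffunP => t; rewrite ffunE; apply/eqP; apply: contraT => Zt.
  have tZ : t \in Supp Z by rewrite inE.
  by move: (noK t (subsetP ZK t tZ)); rewrite (Zsz t tZ) eqxx.
by exists 0; rewrite bd0 /supported_on Supp0 sub0set; split => // t; rewrite Supp0 inE.
Qed.

Lemma powerset_cycles_bound S m : cycles_bound (powerset S) m.+1.
Proof.
have [-> | [v0 v0S]] := set_0Vmem S.
  by apply: cycles_bound_void => t; rewrite powersetE subset0 => /eqP ->; rewrite cards0.
have [v vS vmin] := arg_minnP (@nat_of_ord n) v0S.
move=> Z Zsz ZS Zcyc.
have apex t j : t \in Supp Z -> j \in t -> (v <= j)%N.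
  by move=> /(subsetP ZS); rewrite powersetE => /subsetP tS /tS; apply: vmin.
exists (cone v Z); split.
- move=> t; rewrite Supp_cone => /andP [vt /Zsz].
  by rewrite (cardsD1 v t) vt => ->.
- apply/subsetP => t; rewrite Supp_cone powersetE => /andP [vt /(subsetP ZS)].
  by rewrite powersetE -{2}(setD1K vt) subUset sub1set => ->; rewrite andbT.
- by rewrite (bd_cone apex) Zcyc cone0 subr0.
Qed.

Lemma KcxP D t : reflect (exists2 s, s \in D & t \subset s) (t \in Kcx D).
Proof. by rewrite inE; apply: exists_inP. Qed.

Lemma simplicial_complex_Kcx D : simplicial_complex (Kcx D).
Proof.
move=> s t /KcxP [s' s'D ss'] ts; apply/KcxP; exists s' => //.
exact: subset_trans ts ss'.
Qed.

Lemma KcxU1 S D : Kcx (S |: D) = powerset S :|: Kcx D.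
Proof.
apply/setP => t; rewrite in_setU powersetE; apply/KcxP/orP.
  by move=> [s /setU1P [-> | sD] ts]; [left | right; apply/KcxP; exists s].
by move=> [tS | /KcxP [s sD ts]]; [exists S; rewrite ?setU11 | exists s; rewrite ?setU1r].
Qed.

Lemma Kcx_powersetI D S : Kcx D :&: powerset S = Kcx [set S :&: s | s in D].
Proof.
apply/setP => t; rewrite in_setI powersetE; apply/andP/KcxP.
  by move=> [/KcxP [s sD ts] tS]; exists (S :&: s); rewrite ?imset_f ?subsetI ?tS.
move=> [_ /imsetP [s sD ->]]; rewrite subsetI => /andP [tS ts].
by split => //; apply/KcxP; exists s.
Qed.

Lemma Kcx_top D m t : (forall s, s \in D -> (#|s| <= m)%N) ->
  t \in Kcx D -> #|t| = m -> t \in D.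
Proof.
move=> Dm /KcxP [s sD ts] tm; suff -> : t = s by [].
by apply/eqP; rewrite eqEcard ts tm Dm.
Qed.

Lemma Kcx_cycles_bound_setU1 S D m :
    cycles_bound (Kcx [set S :&: s | s in D]) m -> cycles_bound (Kcx D) m.+1 ->
  cycles_bound (Kcx (S |: D)) m.+1.
Proof.
move=> boundE boundD Z Zsz; rewrite /supported_on KcxU1 => ZK Zcyc.
pose Z2 := [ffun t => if t \in powerset S then Z t else 0]; pose Z1 := Z - Z2.
have SuppZ2 : Supp Z2 = Supp Z :&: powerset S.
  apply/setP => t; rewrite !inE ffunE powersetE.
  by case: ifP; rewrite ?eqxx ?andbT ?andbF.
have SuppZ1 : Supp Z1 = Supp Z :\: powerset S.
  apply/setP => t; rewrite !inE !ffunE powersetE.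
  by case: (t \subset S); rewrite ?subrr ?eqxx ?subr0 ?andbT.
have Z1sz : is_chain_of_size m.+1 Z1.
  by apply: is_chain_of_size_sub Zsz; rewrite SuppZ1 subsetDl.
have Z2sz : is_chain_of_size m.+1 Z2.
  by apply: is_chain_of_size_sub Zsz; rewrite SuppZ2 subsetIl.
have Z1D : supported_on Z1 (Kcx D) by rewrite /supported_on SuppZ1 subDset.
have Z2S : supported_on Z2 (powerset S) by rewrite /supported_on SuppZ2 subsetIr.
have bdZ2 : bd Z2 = - bd Z1.
  by apply/eqP; rewrite -addr_eq0 addrC -bdD /Z1 subrK Zcyc.
have YE : supported_on (bd Z1) (Kcx [set S :&: s | s in D]).
  rewrite /supported_on -Kcx_powersetI subsetI; apply/andP; split.
    exact: supported_on_bd (@simplicial_complex_Kcx D) Z1D.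
  by rewrite -SuppN -bdZ2; apply: supported_on_bd (@simplicial_complex_powerset S) Z2S.
have [W [Wsz WE bdW]] := boundE _ (is_chain_of_size_bd Z1sz) YE (bd_bd Z1).
have [WD WS] : supported_on W (Kcx D) /\ supported_on W (powerset S).
  by move: WE; rewrite /supported_on -Kcx_powersetI subsetI => /andP.
have cyc1 : bd (Z1 - W) = 0 by rewrite bdB bdW subrr.
have cyc2 : bd (Z2 + W) = 0 by rewrite bdD bdZ2 bdW addNr.
have [B1 [B1sz B1D bdB1]] :=
  boundD _ (is_chain_of_sizeB Z1sz Wsz) (supported_onB Z1D WD) cyc1.
have [B2 [B2sz B2S bdB2]] :=
  powerset_cycles_bound (is_chain_of_sizeD Z2sz Wsz) (supported_onD Z2S WS) cyc2.
exists (B1 + B2); split; first exact: is_chain_of_sizeD.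
  apply: supported_onD; first exact: subset_trans B1D (subsetUr _ _).
  exact: subset_trans B2S (subsetUl _ _).
by rewrite bdD -bdB1 -bdB2 addrACA addNr addr0 subrK.
Qed.

Lemma Kcx_cycles_bound k D m : (#|D| <= k <= m)%N -> cycles_bound (Kcx D) m.
Proof.
elim: k D m => [|k IH] D m /andP [Dk km].
  apply: cycles_bound_void => t /KcxP [s]; move: Dk.
  by rewrite leqn0 cards_eq0 => /eqP ->; rewrite inE.
have [-> | [S SD]] := set_0Vmem D.
  by apply: cycles_bound_void => t /KcxP [s]; rewrite inE.
case: m km => // m km; rewrite -(setD1K SD).
have D'k : (#|D :\ S| <= k)%N by move: Dk; rewrite (cardsD1 S D) SD add1n ltnS.
apply: Kcx_cycles_bound_setU1; apply: IH; apply/andP; split => //; last exact: ltnW.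
exact: leq_trans (leq_imset_card _ _) D'k.
Qed.

Lemma bd_supported A c :
  supported_on c A -> bd c = [ffun t => \sum_(s in A) c s * bd_simplex F s t].
Proof.
move=> cA; apply/ffunP => t; rewrite !ffunE [LHS](bigID (mem A)) /=.
rewrite addrC big1 ?add0r //.
move=> s sA; apply/eqP; rewrite mulf_eq0; apply/orP; left.
by apply: contraR sA => cs; apply: (subsetP cA); rewrite inE.
Qed.

End Chains.

Theorem lemma3p1 (F : fieldType) (n : nat) (hn : (0 < n)%N) (d : nat) (hd : (1 <= d)%N)
    (D : {set {set 'I_n}})
    (hDcard : (#|D| <= d)%N)
    (hDdim : forall s, s \in D -> (#|s| <= d.+1)%N)
    (Z : chain F n)
    (hZdim : is_chain_of_size d Z)
    (hZsupp : supported_on Z (Kcx D))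
    (hZcyc : bd Z = 0) :
  (exists B : chain F n,
      [/\ is_chain_of_size d.+1 B, supported_on B (Kcx D) & Z = bd B])
  /\
  (exists c : {set 'I_n} -> F,
      Z = [ffun t => \sum_(s in D | #|s| == d.+1) c s * bd_simplex F s t]).
Proof.
have hDd : (#|D| <= d <= d)%N by rewrite hDcard leqnn.
have [B [Bsz BK ZB]] := Kcx_cycles_bound hDd hZdim hZsupp hZcyc.
split; first by exists B.
have BD : supported_on B [set s in D | #|s| == d.+1].
  apply/subsetP => s sB; rewrite inE (Bsz s sB) eqxx andbT.
  exact: Kcx_top hDdim (subsetP BK s sB) (Bsz s sB).
exists B; rewrite ZB (bd_supported BD); apply/ffunP => t; rewrite !ffunE.
by apply: eq_bigl => s; rewrite inE.
Qed.
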